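(* Let $p,q\in(1,\infty)$. For Borel measures $\mu,\nu$ on $[0,D]$ let $A_D(\mu,\nu)$ be the optimal constant $$A_D(\mu,\nu)=\sup\Big\{\frac{(\int_0^D|f|^q d\mu)^{1/q}}{(\int_0^D|f'|^p d\nu)^{1/p}}:\ f\text{ absolutely continuous},\ f(0)=0,\ 0<\int_0^D|f'|^pd\nu<\infty\Big\}$$ and $B_D(\mu,\nu)=\sup_{x\in(0,D)}\hat\nu(0,x)^{1/p^*}\mu(x,D)^{1/q}$. Let $D<D'\le\infty$ and let $(\mu',\nu')$ be an extension of $(\mu,\nu)$ to $[0,D')$: $\mu'|_{[0,D]}=\mu$, $\nu'|_{[0,D]}=\nu$, and $\mu'|_{(D,D')}=0$. (1) If $A_{D'}(\mu',\nu')\le k\,B_{D'}(\mu',\nu')$ for a constant $k$, then $A_D(\mu,\nu)\le k\,B_D(\mu,\nu)$. (2) In particular, if the inequality $A_{D'}(\mu',\nu')\le k\,B_{D'}(\mu',\nu')$ holds for arbitrary (resp. absolutely continuous) pairs $(\mu',\nu')$, then $A_D(\mu,\nu)\le k\,B_D(\mu,\nu)$ holds for arbitrary (resp. absolutely continuous) pairs $(\mu,\nu)$.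
   Context: $p^*=p/(p-1)$. For a measure $\nu$, $v$ denotes the density of its absolutely continuous part with respect to Lebesgue measure, $\hat v=v^{-1/(p-1)}$, and $\hat\nu(\alpha,\beta)=\int_\alpha^\beta\hat v(x)\,dx$; $\mu(\alpha,\beta)$ is the $\mu$-measure of $(\alpha,\beta)$. On $[0,D')$ the quantities $A_{D'}$, $B_{D'}$ are defined analogously with $D$ replaced by $D'$. *)

From HB Require Import structures.
From mathcomp Require Import all_boot all_order all_algebra.
From mathcomp Require Import all_classical all_reals all_analysis.
From mathcomp Require Import measurable_realfun.
Set Implicit Arguments. Unset Strict Implicit. Unset Printing Implicit Defensive.
Import Order.TTheory GRing.Theory Num.Theory.
Import numFieldNormedType.Exports.
Local Open Scope classical_set_scope.
Local Open Scope ring_scope.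

Section HardyDefs.
Context {R : realType}.
Local Notation leb := (@lebesgue_measure R).

Definition dom_cl (D : R) : set R := `[0, D].
Definition dom_op (D' : \bar R) : set R := [set x | 0 <= x /\ (x%:E < D')%E].

Definition conj_exp (p : R) : R := p / (p - 1).

(* "f is absolutely continuous on I (an interval starting at 0), f(0) = 0,
   and g is (a representative of) its a.e. derivative":
   g is Lebesgue integrable on [0,x] and f x = \int_0^x g for every x in I. *)
Definition AC0_with_deriv (I : set R) (f g : R -> R) : Prop :=
  forall x, I x ->
    leb.-integrable `[0%R, x] (fun t => (g t)%:E) /\
    (f x)%:E = (\int[leb]_(t in `[0%R, x]) (g t)%:E)%E.

(* v is the density (w.r.t. Lebesgue measure) of the absolutely continuous
   part of nu on I: nu = v dx + nu_s with nu_s concentrated on a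
   Lebesgue-null set N (Lebesgue decomposition, restricted to I). *)
Definition ac_density (I : set R) (nu : set R -> \bar R) (v : R -> \bar R) :
    Prop :=
  measurable_fun I v /\ (forall x, I x -> (0 <= v x)%E) /\
  exists N : set R, measurable N /\ leb N = 0%E /\
    forall A, measurable A -> A `<=` I ->
      nu (A `\` N) = (\int[leb]_(x in A) v x)%E.

Definition hatv (p : R) (v : R -> \bar R) (x : R) : \bar R :=
  match v x with
  | r%:E => if r == 0 then +oo%E else (r `^ (- (p - 1)^-1))%:E
  | +oo%E => 0%E
  | -oo%E => +oo%E
  end.

Definition hatnu (p : R) (v : R -> \bar R) (a b : R) : \bar R :=
  (\int[leb]_(x in `](a:R), b[) hatv p v x)%E.

Definition hardy_ratio (p q : R) (I : set R)
    (mu nu : {measure set R -> \bar R}) (f g : R -> R) : \bar R :=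
  ((\int[mu]_(x in I) (`|f x| `^ q)%:E) `^ q^-1 *
   ((\int[nu]_(x in I) (`|g x| `^ p)%:E) `^ p^-1)^-1)%E.

Definition hardyA (p q : R) (I : set R) (mu nu : {measure set R -> \bar R})
    : \bar R :=
  ereal_sup [set r | exists f g : R -> R,
    [/\ AC0_with_deriv I f g,
        (0 < \int[nu]_(x in I) (`|g x| `^ p)%:E)%E,
        (\int[nu]_(x in I) (`|g x| `^ p)%:E < +oo)%E &
        r = hardy_ratio p q I mu nu f g]].

Definition hardyB (p q : R) (I : set R) (E : \bar R)
    (mu : {measure set R -> \bar R}) (v : R -> \bar R) : \bar R :=
  ereal_sup [set (hatnu p v 0 x `^ (conj_exp p)^-1 *
                  mu (`](x:R), +oo[ `&` I) `^ q^-1)%E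
            | x in [set x : R | 0 < x /\ (x%:E < E)%E]].

Definition ac_on (I : set R) (mu : set R -> \bar R) : Prop :=
  forall A, measurable A -> A `<=` I -> leb A = 0%E -> mu A = 0%E.

End HardyDefs.

From HB Require Import structures.
From mathcomp Require Import all_boot all_order all_algebra.
From mathcomp Require Import all_classical all_reals all_analysis.
From mathcomp Require Import measurable_realfun.
Import Order.TTheory GRing.Theory Num.Theory.
Local Open Scope classical_set_scope.
Local Open Scope ring_scope.

(* A_D <= A_{D'}: an admissible pair (f, f') on [0, D] extends to [0, D') by
   freezing f at f(D), i.e. by setting f' = 0 beyond D; since mu' vanishes and
   f' is zero beyond D, both integrals in the Hardy quotient are unchanged.
   B_{D'} = B_D: two densities of the absolutely continuous part of nu agree
   a.e. on [0, D], hence hat nu'(0, x) = hat nu(0, x) for x < D, while the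
   factor mu'((x, D')) vanishes for x >= D.  Part (2) is part (1) applied to
   the restrictions of mu and nu to [0, D], whose density is v extended by 0. *)

Section density_uniqueness.
Local Open Scope ereal_scope.
Context d (T : measurableType d) (R : realType) (mu : {measure set T -> \bar R}).
Variables (I : set T) (mI : measurable I) (muI : mu I < +oo).

(* On a sublevel set of [v] the density [v] is integrable, so the integrable
   case [integral_ae_eq] applies; these sets exhaust [I]. *)
Let ae_eq_on_le (v v' : T -> \bar R) (n : nat) :
  measurable_fun I v -> measurable_fun I v' -> (forall x, I x -> 0 <= v x) ->
  (forall E, measurable E -> E `<=` I ->
     \int[mu]_(x in E) v x = \int[mu]_(x in E) v' x) ->
  ae_eq mu (I `&` [set x | v x <= n%:R%:E]) v v'.
Proof.
move=> mv mv' v0 vv'; set In := I `&` _.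
have mIn : measurable In by exact: emeasurable_fun_infty_c.
have InI : In `<=` I by exact: subIsetl.
apply: integral_ae_eq => //; last 2 first.
- exact: measurable_funS mv'.
- by move=> E EIn mE; apply: vv' => //; exact: subset_trans EIn InI.
apply/integrableP; split; first exact: measurable_funS mv.
apply: (@le_lt_trans _ _ (\int[mu]_(x in In) (cst n%:R%:E) x)).
  apply: ge0_le_integral => //.
  - by apply: measurableT_comp => //; exact: measurable_funS mv.
  - by move=> x [Ix vx]; rewrite gee0_abs // v0.
rewrite integral_cst //; apply: (@le_lt_trans _ _ (n%:R%:E * mu I)).
  by apply: lee_wpmul2l; rewrite ?lee_fin // le_measure ?inE.
exact: lte_mul_pinfty.
Qed.

Lemma ge0_integral_ae_eq (v v' : T -> \bar R) :
  measurable_fun I v -> measurable_fun I v' ->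
  (forall x, I x -> 0 <= v x) -> (forall x, I x -> 0 <= v' x) ->
  (forall E, measurable E -> E `<=` I ->
     \int[mu]_(x in E) v x = \int[mu]_(x in E) v' x) ->
  ae_eq mu I v v'.
Proof.
move=> mv mv' v0 v'0 vv'.
have v'v E : measurable E -> E `<=` I ->
    \int[mu]_(x in E) v' x = \int[mu]_(x in E) v x by move=> mE EI; rewrite vv'.
have vv'n := ae_foralln (fun n => ae_eq_on_le _ _ n mv mv' v0 vv').
have v'vn := ae_foralln (fun n => ae_eq_on_le _ _ n mv' mv v'0 v'v).
apply: filterS2 vv'n v'vn => x vx v'x Ix.
case Ev : (v x) => [r| |]; last by have := v0 x Ix; rewrite Ev.
  rewrite -Ev; apply: (vx (Num.Def.truncn r).+1); split => //=.
  by rewrite Ev lee_fin ltW // truncnS_gt.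
case Ev' : (v' x) => [r| |]; last by have := v'0 x Ix; rewrite Ev'.
  rewrite -Ev -Ev'; apply/esym/(v'x (Num.Def.truncn r).+1); split => //=.
  by rewrite Ev' lee_fin ltW // truncnS_gt.
by [].
Qed.

End density_uniqueness.

Section hardy_extension.
Context {R : realType}.
Local Notation leb := (@lebesgue_measure R).

Definition hat_weight (p : R) (e : \bar R) : \bar R :=
  match e with
  | r%:E => if r == 0 then +oo%E else (r `^ (- (p - 1)^-1))%:E
  | +oo%E => 0%E
  | -oo%E => +oo%E
  end.

Lemma hatvE p v : hatv p v = hat_weight p \o v.
Proof. by []. Qed.

Lemma measurable_hat_weight p : measurable_fun [set: \bar R] (hat_weight p).
Proof.
have -> : hat_weight p = (fun e => if (e == 0%E) || (e == -oo%E) then +oo%E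
    else if e == +oo%E then 0%E else ((fine e) `^ (- (p - 1)^-1))%:E).
  by apply/funext => -[r||] //=; rewrite eqe; case: (r == 0).
apply: measurable_fun_ifT; last apply: measurable_fun_ifT.
- apply: (measurable_fun_bool true) => //; rewrite setTI.
  rewrite (_ : _ @^-1` _ = [set 0%E] `|` [set -oo%E]); first exact: measurableU.
  by apply/seteqP; split => x /=; [case/orP => /eqP ->; [left|right] |
     case => ->; rewrite eqxx ?orbT].
- exact: measurable_cst.
- apply: (measurable_fun_bool true) => //; rewrite setTI.
  rewrite (_ : _ @^-1` _ = [set +oo%E]) //.
  by apply/seteqP; split => x /=; [move/eqP|move=> ->].
- exact: measurable_cst.
apply/measurable_EFinP.
exact: measurableT_comp (measurable_powR _) (fine_measurable measurableT).
Qed.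

Lemma ae_eq_hatnu {I : set R} (mI : measurable I) p v v' a b :
  `]a, b[ `<=` I -> measurable_fun I v -> measurable_fun I v' ->
  ae_eq leb I v v' -> hatnu p v a b = hatnu p v' a b.
Proof.
move=> abI mv mv' vv'; rewrite /hatnu !hatvE.
apply: ae_eq_integral => //.
- exact: measurableT_comp (measurable_hat_weight p) (measurable_funS mI abI mv).
- exact: measurableT_comp (measurable_hat_weight p) (measurable_funS mI abI mv').
- by apply: filterS vv' => y vv'y /abI /vv'y /= ->.
Qed.

Lemma ac_density_integral_eq (I J : set R) (nu nu' : {measure set R -> \bar R})
    v v' : measurable I -> measurable J -> I `<=` J ->
  ac_density I nu v -> ac_density J nu' v' ->
  (forall A, measurable A -> A `<=` I -> nu' A = nu A) ->
  forall E, measurable E -> E `<=` I ->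
    (\int[leb]_(x in E) v x = \int[leb]_(x in E) v' x)%E.
Proof.
move=> mI mJ IJ [mv [v0 [N [mN [N0 vN]]]]] [mv' [v'0 [N' [mN' [N'0 v'N']]]]] nu'E.
move=> E mE EI.
have mNN' : measurable (N `|` N') by exact: measurableU.
have NN'0 : leb (N `|` N') = 0%E by rewrite measureU0.
set E0 := E `\` (N `|` N').
have mE0 : measurable E0 by exact: measurableD.
have E0I : E0 `<=` I by move=> y [/EI].
rewrite (@ge0_negligible_integral _ _ _ leb _ _ _ mNN' mE) //; last 2 first.
- exact: measurable_funS mI EI mv.
- by move=> y /EI; apply: v0.
rewrite [RHS](@ge0_negligible_integral _ _ _ leb _ _ _ mNN' mE) //; last 2 first.
- exact: measurable_funS mJ (subset_trans EI IJ) mv'.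
- by move=> y /EI /IJ; apply: v'0.
have E0N : E0 `\` N = E0 by rewrite /E0 setDDl setUAC setUid.
have E0N' : E0 `\` N' = E0 by rewrite /E0 setDDl -setUA setUid.
by rewrite -vN // E0N -v'N' ?E0N' ?nu'E //; exact: subset_trans E0I IJ.
Qed.

Lemma ac_density_ae_eq {I J : set R} {nu nu' : {measure set R -> \bar R}} {v v'} :
  measurable I -> measurable J -> I `<=` J -> (leb I < +oo)%E ->
  ac_density I nu v -> ac_density J nu' v' ->
  (forall A, measurable A -> A `<=` I -> nu' A = nu A) ->
  ae_eq leb I v v'.
Proof.
move=> mI mJ IJ IFin hv hv' nu'E.
have [mv [v0 _]] := hv; have [mv' [v'0 _]] := hv'.
apply: ge0_integral_ae_eq => //.
- exact: measurable_funS mv'.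
- by move=> x /IJ; apply: v'0.
- exact: ac_density_integral_eq hv hv' nu'E.
Qed.

Definition dom_tail (D : R) (D' : \bar R) : set R := `]D, +oo[ `&` dom_op D'.

Lemma measurable_dom_op (D' : \bar R) : measurable (dom_op D').
Proof.
case: D' => [r| |].
- rewrite (_ : dom_op _ = `[0, r[%classic); first exact: measurable_itv.
  apply/seteqP; split => y; rewrite /dom_op /= in_itv /= lte_fin.
    by move=> [-> ->].
  by move=> /andP[-> ->].
- rewrite (_ : dom_op _ = `[0, +oo[%classic); first exact: measurable_itv.
  by apply/seteqP; split => y; rewrite /dom_op /= in_itv /= andbT ltry; [case|].
- rewrite (_ : dom_op _ = set0) //.
  by apply/seteqP; split => y //; rewrite /dom_op /= => -[_]; rewrite ltNge leNye.
Qed.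

Lemma measurable_dom_cl (D : R) : measurable (dom_cl D).
Proof. exact: measurable_itv. Qed.

Lemma measurable_dom_tail (D : R) (D' : \bar R) : measurable (dom_tail D D').
Proof. exact: measurableI (measurable_dom_op D'). Qed.

Lemma dom_cl_le (D x : R) : dom_cl D x -> x <= D.
Proof. by rewrite /dom_cl /= in_itv /= => /andP[]. Qed.

Lemma dom_cl_of {D x : R} : 0 <= x -> x <= D -> dom_cl D x.
Proof. by move=> x0 xD; rewrite /dom_cl /= in_itv /= x0 xD. Qed.

Lemma dom_cl_ub {D : R} : 0 <= D -> dom_cl D D.
Proof. by move=> D0; exact: dom_cl_of. Qed.

Lemma dom_tail_gt (D : R) (D' : \bar R) (x : R) : dom_tail D D' x -> D < x.
Proof. by case; rewrite /= in_itv /= andbT. Qed.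

Lemma dom_cl_tail_disj (D : R) (D' : \bar R) : dom_cl D `&` dom_tail D D' = set0.
Proof.
apply/seteqP; split => x // [/dom_cl_le xD /dom_tail_gt Dx].
by have := lt_le_trans Dx xD; rewrite ltxx.
Qed.

Lemma dom_opU {D : R} {D' : \bar R} : 0 <= D -> (D%:E < D')%E ->
  dom_op D' = dom_cl D `|` dom_tail D D'.
Proof.
move=> D0 DD'; apply/seteqP; split => y;
  rewrite /dom_tail /dom_op /dom_cl /= ?in_itv /= ?andbT.
  move=> [y0 yD']; have [yD|Dy] := leP y D; first by left; rewrite y0.
  by right.
case=> [/andP[y0 yD]|[]//]; split => //.
by apply: le_lt_trans DD'; rewrite lee_fin.
Qed.

Lemma dom_cl_sub_op {D : R} {D' : \bar R} : 0 <= D -> (D%:E < D')%E ->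
  dom_cl D `<=` dom_op D'.
Proof. by move=> D0 DD'; rewrite (dom_opU D0 DD'); exact: subsetUl. Qed.

Lemma integral_dom_op {D : R} {D' : \bar R} {m m' : {measure set R -> \bar R}}
    {F : R -> \bar R} : 0 <= D -> (D%:E < D')%E ->
  measurable_fun (dom_op D') F -> (forall x, dom_op D' x -> (0 <= F x)%E) ->
  (forall A, measurable A -> A `<=` dom_cl D -> m' A = m A) ->
  (\int[m']_(x in dom_tail D D') F x = 0)%E ->
  (\int[m']_(x in dom_op D') F x = \int[m]_(x in dom_cl D) F x)%E.
Proof.
move=> D0 DD' mF F0 m'E tail0.
rewrite [in LHS](dom_opU D0 DD') ge0_integral_setU ?tail0 ?adde0 //.
- exact: eq_measure_integral.
- exact: measurable_itv.
- exact: measurable_dom_tail.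
- by rewrite -dom_opU.
- by move=> x; rewrite -(dom_opU D0 DD'); exact: F0.
- exact/disj_set2P/dom_cl_tail_disj.
Qed.

Definition extend_right {T : Type} (D : R) (c : T) (g : R -> T) (x : R) : T :=
  if x <= D then g x else c.

Lemma patch_dom_cl (D t : R) (h : R -> \bar R) : 0 <= t ->
  (h \_ (dom_cl D)) t = extend_right D 0%E h t.
Proof.
move=> t0; rewrite patchE /extend_right; case: ifPn => [/set_mem/dom_cl_le -> //|].
by case: leP => // tD /negP[]; rewrite inE; exact: dom_cl_of.
Qed.

Lemma extend_right_dom_cl {T : Type} {D : R} {c : T} {g : R -> T} :
  {in dom_cl D, extend_right D c g =1 g}.
Proof. by move=> x /[1!inE] /dom_cl_le xD; rewrite /extend_right xD. Qed.

Lemma extend_right_dom_tail {T : Type} {D : R} {D' : \bar R} {c : T} {g : R -> T} :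
  {in dom_tail D D', extend_right D c g =1 cst c}.
Proof. by move=> x /[1!inE] /dom_tail_gt Dx; rewrite /extend_right leNgt Dx. Qed.

Lemma AC0_with_deriv_measurable {D : R} {f g : R -> R} : 0 <= D ->
  AC0_with_deriv (dom_cl D) f g ->
  measurable_fun (dom_cl D) f /\ measurable_fun (dom_cl D) g.
Proof.
move=> D0 fg; have [intg fD] := fg D (dom_cl_ub D0).
split; last by apply/measurable_EFinP; exact: measurable_int intg.
have cont := @parameterized_integral_continuous R 0 D g D0 intg.
apply: eq_measurable_fun (subspace_continuous_measurable_fun (measurable_itv _) cont).
move=> x /[1!inE] /fg [_ fx].
by rewrite /from_subspace /= /parameterized_integral /Rintegral -fx.
Qed.

Lemma AC0_with_deriv_extend {D : R} {D' : \bar R} {f g : R -> R} : 0 <= D ->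
  AC0_with_deriv (dom_cl D) f g ->
  AC0_with_deriv (dom_op D') (extend_right D (f D) f) (extend_right D 0 g).
Proof.
move=> D0 fg x [x0 _]; have [xD|Dx] := leP x D.
  have [intg fx] := fg x (dom_cl_of x0 xD).
  have gE : {in `[0, x]%classic, EFin \o g =1 EFin \o extend_right D 0 g}.
    move=> t; rewrite inE /= in_itv /= => /andP[_ tx].
    by rewrite /extend_right (le_trans tx xD).
  split; first exact: eq_integrable intg.
  by rewrite /extend_right xD fx; apply: eq_integral.
have [intg fD] := fg D (dom_cl_ub D0).
have gE : {in `[0, x]%classic,
    (EFin \o g) \_ `[0, D]%classic =1 EFin \o extend_right D 0 g}.
  move=> t; rewrite inE /= in_itv /= => /andP[t0 _].
  by rewrite [LHS](patch_dom_cl _ _ _ t0) /extend_right; case: ifP.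
have xD : `[0, x]%classic `&` `[0, D]%classic = `[0, D]%classic.
  by apply: setIidr => t; rewrite /= !in_itv /= => /andP[-> tD];
    rewrite (le_trans tD (ltW Dx)).
split.
  apply: (@eq_integrable _ _ _ leb `[0, x]%classic (measurable_itv _) _ _ gE).
  by apply/integrable_restrict => //; rewrite xD.
rewrite /extend_right leNgt Dx /= fD -(@eq_integral _ _ _ leb _ _ _ gE).
by rewrite -integral_mkcondr xD.
Qed.

Lemma measurable_extend_right d (T : measurableType d) (D : R) (D' : \bar R)
    (c : T) (g : R -> T) : 0 <= D -> (D%:E < D')%E ->
  measurable_fun (dom_cl D) g -> measurable_fun (dom_op D') (extend_right D c g).
Proof.
move=> D0 DD' mg; rewrite (dom_opU D0 DD').
apply/measurable_funU; [exact: measurable_itv|exact: measurable_dom_tail|split].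
  by apply: eq_measurable_fun mg => x /extend_right_dom_cl ->.
apply: (eq_measurable_fun (cst c)); last exact: measurable_cst.
by move=> x /extend_right_dom_tail ->.
Qed.

Lemma hardyB_ge0 p q (D : R) (mu : {measure set R -> \bar R}) v : 0 < D ->
  (0 <= hardyB p q (dom_cl D) D%:E mu v)%E.
Proof.
move=> D0; apply: le_trans (ereal_sup_ubound _); last first.
  exists (D / 2) => //; split; first by rewrite divr_gt0.
  by rewrite lte_fin ltr_pdivrMr // ltr_pMr // ltr1n.
by rewrite mule_ge0 // poweR_ge0.
Qed.

Section extension.
Variables (D : R) (D' : \bar R) (D0 : 0 < D) (DD' : (D%:E < D')%E).
Variables (mu nu mu' nu' : {measure set R -> \bar R}).
Hypothesis mu'E : forall A, measurable A -> A `<=` dom_cl D -> mu' A = mu A.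
Hypothesis nu'E : forall A, measurable A -> A `<=` dom_cl D -> nu' A = nu A.
Hypothesis mu'_tail : forall A, measurable A -> A `<=` dom_tail D D' -> mu' A = 0%E.

Let measurable_pow_extend r c (h : R -> R) : measurable_fun (dom_cl D) h ->
  measurable_fun (dom_op D') (fun x => (`|extend_right D c h x| `^ r)%:E).
Proof.
move=> mh; apply/measurable_EFinP; apply: measurableT_comp (measurable_powR _) _.
apply: measurableT_comp => //; exact: measurable_extend_right (ltW D0) DD' mh.
Qed.

Lemma hardyA_le_ext p q : p != 0 ->
  (hardyA p q (dom_cl D) mu nu <= hardyA p q (dom_op D') mu' nu')%E.
Proof.
move=> p0; apply: ge_ereal_sup => _ [f [g [fg g_pos g_fin ->]]].
have [mf mg] := AC0_with_deriv_measurable (ltW D0) fg.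
have num : (\int[mu']_(x in dom_op D') (`|extend_right D (f D) f x| `^ q)%:E =
            \int[mu]_(x in dom_cl D) (`|f x| `^ q)%:E)%E.
  rewrite (integral_dom_op (ltW D0) DD' (measurable_pow_extend _ _ _ mf) _ mu'E) //.
  - by apply: eq_integral => x /extend_right_dom_cl ->.
  - by rewrite (eq_measure_integral mzero) ?integral_measure_zero.
have den : (\int[nu']_(x in dom_op D') (`|extend_right D 0 g x| `^ p)%:E =
            \int[nu]_(x in dom_cl D) (`|g x| `^ p)%:E)%E.
  rewrite (integral_dom_op (ltW D0) DD' (measurable_pow_extend _ _ _ mg) _ nu'E) //.
  - by apply: eq_integral => x /extend_right_dom_cl ->.
  - apply: integral0_eq => x /mem_set /extend_right_dom_tail ->.
    by rewrite normr0 powR0.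
apply: ereal_sup_ubound; exists (extend_right D (f D) f), (extend_right D 0 g); split.
- exact: AC0_with_deriv_extend (ltW D0) fg.
- by rewrite den.
- by rewrite den.
- by rewrite /hardy_ratio num den.
Qed.

Lemma ext_measure_ray (x : R) : x <= D ->
  mu' (`]x, +oo[ `&` dom_op D') = mu (`]x, +oo[ `&` dom_cl D).
Proof.
move=> xD; have mI : measurable (`]x, +oo[ `&` dom_cl D).
  by apply: measurableI; exact: measurable_itv.
have tailx : dom_tail D D' `<=` `]x, +oo[.
  by move=> y /dom_tail_gt Dy; rewrite /= in_itv /= andbT (le_lt_trans xD Dy).
rewrite (dom_opU (ltW D0) DD') setIUr (setIidr tailx) measureU //; last 2 first.
- exact: measurable_dom_tail.
- by rewrite -setIA dom_cl_tail_disj setI0.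
rewrite -[RHS]adde0; congr (_ + _)%E.
  by apply: mu'E => //; exact: subIsetr.
by apply: mu'_tail => //; exact: measurable_dom_tail.
Qed.

Lemma ext_measure_ray0 (x : R) : D <= x -> mu' (`]x, +oo[ `&` dom_op D') = 0%E.
Proof.
move=> Dx; apply: mu'_tail; first by apply: measurableI; [exact: measurable_itv|
  exact: measurable_dom_op].
move=> y [/=]; rewrite in_itv /= andbT => xy Oy; split => //.
by rewrite /= in_itv /= andbT (le_lt_trans Dx xy).
Qed.

Lemma hardyB_ext p q v v' : q != 0 ->
  (forall x, 0 < x -> x < D -> hatnu p v' 0 x = hatnu p v 0 x) ->
  hardyB p q (dom_op D') D' mu' v' = hardyB p q (dom_cl D) D%:E mu v.
Proof.
move=> q0 hatnuE; apply/eqP; rewrite eq_le; apply/andP; split.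
- apply: ge_ereal_sup => _ [x [x0 xD'] <-].
  have [xD|Dx] := ltP x D; last first.
    by rewrite ext_measure_ray0 // poweR0r ?invr_eq0 // mule0 hardyB_ge0.
  rewrite hatnuE // ext_measure_ray; last exact: ltW.
  by apply: ereal_sup_ubound; exists x.
- apply: ge_ereal_sup => _ [x [x0 xD] <-]; rewrite lte_fin in xD.
  rewrite -hatnuE // -ext_measure_ray; last exact: ltW.
  apply: ereal_sup_ubound; exists x => //; split => //.
  by apply: lt_trans DD'; rewrite lte_fin.
Qed.

Lemma hardy_constant_restrict p q k v v' : p != 0 -> q != 0 ->
  ac_density (dom_cl D) nu v -> ac_density (dom_op D') nu' v' ->
  (hardyA p q (dom_op D') mu' nu' <= k%:E * hardyB p q (dom_op D') D' mu' v')%E ->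
  (hardyA p q (dom_cl D) mu nu <= k%:E * hardyB p q (dom_cl D) D%:E mu v)%E.
Proof.
move=> p0 q0 hv hv' hardy'.
have [mv _] := hv; have [mv' _] := hv'.
have CO := dom_cl_sub_op (ltW D0) DD'.
have vv' : ae_eq leb (dom_cl D) v v'.
  apply: (ac_density_ae_eq (measurable_dom_cl D) (measurable_dom_op D') CO _
    hv hv' nu'E).
  by rewrite lebesgue_measure_itv /=; case: ifP => _; rewrite ?ltry.
rewrite -(hardyB_ext p q v v' q0); first exact: le_trans (hardyA_le_ext p q p0) hardy'.
move=> x x0 xD; apply/esym; apply: (ae_eq_hatnu (measurable_dom_cl D)) => //.
- move=> y; rewrite /= in_itv /= => /andP[y0 yx].
  exact: dom_cl_of (ltW y0) (ltW (lt_trans yx xD)).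
- exact: measurable_funS (measurable_dom_op D') CO mv'.
Qed.

End extension.

Section restriction.
Variables (D : R) (D' : \bar R) (D0 : 0 < D) (DD' : (D%:E < D')%E).
Let mC := measurable_dom_cl D.

Lemma mrestr_dom_cl (m : {measure set R -> \bar R}) A :
  A `<=` dom_cl D -> mrestr m mC A = m A.
Proof. by move=> AC; rewrite /mrestr setIidl. Qed.

Lemma mrestr_dom_tail (m : {measure set R -> \bar R}) A :
  A `<=` dom_tail D D' -> mrestr m mC A = 0%E.
Proof.
move=> AT; rewrite /mrestr (_ : A `&` dom_cl D = set0) ?measure0 //.
by rewrite -subset0 -(dom_cl_tail_disj D D') setIC; exact: setIS.
Qed.

Lemma ac_on_mrestr (m : {measure set R -> \bar R}) :
  ac_on (dom_cl D) m -> ac_on (dom_op D') (mrestr m mC).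
Proof.
move=> mac A mA _ A0; apply: mac; [exact: measurableI|exact: subIsetr|].
by apply: (subset_measure0 _ _ _ A0) => //; exact: measurableI.
Qed.

Lemma ac_density_mrestr (nu : {measure set R -> \bar R}) v :
  ac_density (dom_cl D) nu v ->
  ac_density (dom_op D') (mrestr nu mC) (extend_right D 0%E v).
Proof.
move=> [mv [v0 [N [mN [N0 vN]]]]]; split.
  exact: measurable_extend_right (ltW D0) DD' mv.
split.
  move=> x [x0 _]; rewrite /extend_right; case: ifPn => // xD.
  exact/v0/dom_cl_of.
exists N; split => //; split => // A mA AO.
rewrite /mrestr setIDAC setIDA vN; last 2 first.
- exact: measurableI.
- exact: subIsetr.
by rewrite integral_mkcondr; apply: eq_integral => x /[1!inE] /AO [x0 _];
  rewrite patch_dom_cl.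
Qed.

End restriction.

End hardy_extension.

Theorem lemma4p2 (R : realType) (p q : R) (hp : 1 < p) (hq : 1 < q)
    (D : R) (hD : 0 < D) (D' : \bar R) (hDD' : (D%:E < D')%E) (k : R) :
  (* (1) *)
  (forall (mu nu mu' nu' : {measure set R -> \bar R}) (v v' : R -> \bar R),
     ac_density (dom_cl D) nu v ->
     ac_density (dom_op D') nu' v' ->
     (forall A, measurable A -> A `<=` dom_cl D -> mu' A = mu A) ->
     (forall A, measurable A -> A `<=` dom_cl D -> nu' A = nu A) ->
     (forall A, measurable A -> A `<=` `]D, +oo[ `&` dom_op D' -> mu' A = 0%E) ->
     (hardyA p q (dom_op D') mu' nu' <= k%:E * hardyB p q (dom_op D') D' mu' v')%E ->
     (hardyA p q (dom_cl D) mu nu <= k%:E * hardyB p q (dom_cl D) D%:E mu v)%E)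
  /\
  (* (2), arbitrary pairs *)
  ((forall (mu' nu' : {measure set R -> \bar R}) (v' : R -> \bar R),
      ac_density (dom_op D') nu' v' ->
      (hardyA p q (dom_op D') mu' nu' <= k%:E * hardyB p q (dom_op D') D' mu' v')%E) ->
   forall (mu nu : {measure set R -> \bar R}) (v : R -> \bar R),
      ac_density (dom_cl D) nu v ->
      (hardyA p q (dom_cl D) mu nu <= k%:E * hardyB p q (dom_cl D) D%:E mu v)%E)
  /\
  (* (2), absolutely continuous pairs *)
  ((forall (mu' nu' : {measure set R -> \bar R}) (v' : R -> \bar R),
      ac_on (dom_op D') mu' -> ac_on (dom_op D') nu' ->
      ac_density (dom_op D') nu' v' ->
      (hardyA p q (dom_op D') mu' nu' <= k%:E * hardyB p q (dom_op D') D' mu' v')%E) ->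
   forall (mu nu : {measure set R -> \bar R}) (v : R -> \bar R),
      ac_on (dom_cl D) mu -> ac_on (dom_cl D) nu ->
      ac_density (dom_cl D) nu v ->
      (hardyA p q (dom_cl D) mu nu <= k%:E * hardyB p q (dom_cl D) D%:E mu v)%E).
Proof.
have p0 : p != 0 by rewrite gt_eqF // (lt_trans ltr01).
have q0 : q != 0 by rewrite gt_eqF // (lt_trans ltr01).
have restrict (mu nu : {measure set R -> \bar R}) v : ac_density (dom_cl D) nu v ->
    (hardyA p q (dom_op D') (mrestr mu (measurable_dom_cl D))
       (mrestr nu (measurable_dom_cl D)) <=
     k%:E * hardyB p q (dom_op D') D' (mrestr mu (measurable_dom_cl D))
       (extend_right D 0%E v))%E ->
    (hardyA p q (dom_cl D) mu nu <= k%:E * hardyB p q (dom_cl D) D%:E mu v)%E.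
  move=> hv hardy'.
  apply: (hardy_constant_restrict _ _ hD hDD' mu nu _ _ _ _ _ _ _ _ _ _
    p0 q0 hv _ hardy').
  - by move=> A _; exact: mrestr_dom_cl.
  - by move=> A _; exact: mrestr_dom_cl.
  - by move=> A _; exact: mrestr_dom_tail.
  - exact: ac_density_mrestr.
split.
  move=> mu nu mu' nu' v v' hv hv' mu'E nu'E mu'_tail.
  exact: (hardy_constant_restrict _ _ hD hDD' _ _ _ _ mu'E nu'E mu'_tail
    _ _ _ _ _ p0 q0 hv hv').
split=> [hardy' mu nu v hv | hardy' mu nu v muac nuac hv]; apply: (restrict _ _ _ hv).
- exact/hardy'/(ac_density_mrestr _ _ hD hDD').
- by apply: hardy'; [exact: ac_on_mrestr..|exact: (ac_density_mrestr _ _ hD hDD')].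
Qed.
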